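(* Let $\Sigma$ be a finite alphabet, let $y^* = y^*_1 \cdots y^*_n \in \Sigma^*$, let $p \in \Sigma^*$, and let $m(p) = \min_{0 \le j \le n} D(p, y^*_{1..j})$. For a symbol $a \in \Sigma$ define the optimal Q-value $$Q^*(p, a) \;=\; \max_{s \in \Sigma^*} \bigl(-D(p\,a\,s,\; y^* )\bigr).$$ Then $$Q^*(p,a) \;=\; \begin{cases} -m(p) & \text{if there exists } j \in \{0,\dots,n-1\} \text{ with } D(p, y^*_{1..j}) = m(p) \text{ and } y^*_{j+1} = a,\\[2pt] -m(p) - 1 & \text{otherwise.}\end{cases}$$ Furthermore, terminating immediately (i.e. choosing the empty suffix, giving value $-D(p,y^* )$) attains the value $-m(p)$ if and only if $D(p, y^* ) = m(p)$, and otherwise has value at most $-m(p)-1$.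
   Context: $D(u,v)$ denotes the Levenshtein edit distance between finite strings $u,v$: the minimum number of single-symbol insertions, deletions and substitutions needed to transform $u$ into $v$. For a string $y^*$ of length $n$, $y^*_{1..j}$ denotes its prefix of length $j$ ($y^*_{1..0}$ is the empty string). Juxtaposition $p\,a\,s$ denotes concatenation of the string $p$, the single symbol $a$, and the string $s$. *)

From mathcomp Require Import all_boot all_order all_algebra.
Set Implicit Arguments. Unset Strict Implicit. Unset Printing Implicit Defensive.
Import GRing.Theory Num.Theory.

(* Levenshtein edit distance, by the standard recursion:
   D([], t) = |t|, D(s, []) = |s|,
   D(a::s, b::t) = min(D(s, b::t)+1, D(a::s, t)+1, D(s,t) + [a<>b]). *)
Fixpoint lev (T : eqType) (s t : seq T) {struct s} : nat :=
  match s with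
  | [::] => size t
  | a :: s' =>
      let fix aux (t : seq T) : nat :=
        match t with
        | [::] => size s
        | b :: t' => minn (minn (lev s' t).+1 (aux t').+1) (lev s' t' + (a != b))
        end in aux t
  end.

Definition mpref (T : eqType) (p y : seq T) : nat :=
  \big[minn/lev p [::]]_(j < (size y).+1) lev p (take j y).

Definition is_max_of (S : Type) (f : S -> int) (v : int) : Prop :=
  (exists s, f s = v) /\ (forall s, (f s <= v)%R).

Definition Qstar_is (T : eqType) (p : seq T) (a : T) (y : seq T) (v : int) : Prop :=
  is_max_of (fun s : seq T => (- (lev (p ++ a :: s) y)%:Z)%R) v.

From mathcomp Require Import all_boot all_order all_algebra zify.
Import Order.TTheory GRing.Theory Num.Theory.

Set Implicit Arguments.
Unset Strict Implicit.
Unset Printing Implicit Defensive.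

(* An optimal alignment of [u ++ s] against [y] splits [y] into a prefix
   aligned with [u] and a suffix aligned with [s], so
   D(p a s, y) = min_j (D(p, y_{1..j}) + D(a s, y_{j+1..n})) >= m(p),
   and the second summand vanishes iff [a s] is exactly [y_{j+1..n}].
   Hence the value m(p) is reached iff some optimal prefix [y_{1..j}] is
   followed by [a]; otherwise m(p) + 1 is always reached by deleting [a]
   and copying the rest of [y] after an optimal prefix. *)

Section EditDistance.
Variable T : eqType.
Implicit Types (b c : T) (s t u y : seq T).

Lemma lev_cons c b s t :
  lev (c :: s) (b :: t) =
  minn (minn (lev s (b :: t)).+1 (lev (c :: s) t).+1) (lev s t + (c != b)).
Proof. by []. Qed.

Lemma lev0s t : lev [::] t = size t.
Proof. by []. Qed.

Lemma levs0 s : lev s [::] = size s.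
Proof. by case: s. Qed.

Lemma lev_consr_le b s t : lev s (b :: t) <= (lev s t).+1.
Proof. by case: s => [|c s]; rewrite ?lev0s // lev_cons; lia. Qed.

Lemma lev_consl_le c s t : lev (c :: s) t <= (lev s t).+1.
Proof. by case: t => [|b t]; rewrite ?levs0 // lev_cons; lia. Qed.

Lemma lev_refl s : lev s s = 0.
Proof. by elim: s => [|c s IHs] //; rewrite lev_cons IHs eqxx; lia. Qed.

Lemma lev_eq0 s t : (lev s t == 0) = (s == t).
Proof.
apply/eqP/eqP => [|->]; last exact: lev_refl.
elim: s t => [|c s IHs] [|b t] //; rewrite lev_cons.
by case: eqP => [<- lev0|_]; [rewrite (IHs t) //; lia | lia].
Qed.

Lemma lev_le_drop s t j : lev s t <= j + lev s (drop j t).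
Proof.
elim: t j => [|b t IHt] [|j]; rewrite ?drop0 ?leqnn //=; first lia.
by have := IHt j; have := lev_consr_le b s t; lia.
Qed.

Lemma lev_cat_le_split u s y j : j <= size y ->
  lev (u ++ s) y <= lev u (take j y) + lev s (drop j y).
Proof.
elim: u y j => [|c u IHu] y j le_j.
  by rewrite lev0s size_takel // lev_le_drop.
elim: y j le_j => [|b y IHy] [|j] le_j //.
- by rewrite take0 drop0 !levs0 /= size_cat.
- have := IHu (b :: y) 0 isT.
  by rewrite !take0 !drop0 !levs0 cat_cons lev_cons /=; lia.
- have := IHu (b :: y) j.+1 le_j; have := IHu y j le_j; have := IHy j le_j.
  by rewrite !cat_cons ![take _ (b :: y)]/= ![drop _ (b :: y)]/= !lev_cons; lia.
Qed.

Lemma lev_cat_split u s y : exists2 j, j <= size y &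
  lev u (take j y) + lev s (drop j y) <= lev (u ++ s) y.
Proof.
elim: u y => [|c u IHu] y; first by exists 0; rewrite ?take0 ?drop0.
elim: y => [|b y [k le_k IHy]]; first by exists 0; rewrite //= !levs0 size_cat.
rewrite cat_cons in IHy *; rewrite lev_cons.
have [j le_j IHj] := IHu (b :: y); have [i le_i IHi] := IHu y.
set A := lev _ (b :: y); set B := lev _ y; set C := lev _ y + _.
set m := minn _ C; have [->|[->|->]] : m = A.+1 \/ m = B.+1 \/ m = C by lia.
- exists j => //; have := lev_consl_le c u (take j (b :: y)); lia.
- exists k.+1 => //; rewrite [take _ _]/= [drop _ _]/=.
  have := lev_consr_le b (c :: u) (take k y); lia.
- exists i.+1 => //; rewrite [take _ _]/= [drop _ _]/= lev_cons; lia.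
Qed.
End EditDistance.

Section PrefixDistance.
Variables (T : eqType) (p y : seq T).

Let F (i : 'I_(size y).+1) := lev p (take i y).

Let mpref_bigmin : mpref p y = \big[Order.min/lev p [::]]_i F i.
Proof. reflexivity. Qed.

Lemma mpref_le_take j : mpref p y <= lev p (take j y).
Proof.
have -> : take j y = take (minn j (size y)) y by rewrite take_min take_size.
rewrite mpref_bigmin.
exact: (bigmin_le _ (Ordinal (geq_minr j (size y) : _ < (size y).+1)) F).
Qed.

Lemma mpref_attained : exists2 j, j <= size y & lev p (take j y) = mpref p y.
Proof.
case: (arg_minnP F (isT : predT ord0)) => j _ min_j.
exists j; first by rewrite -ltnS.
apply/eqP; rewrite eqn_leq mpref_le_take andbT mpref_bigmin.
rewrite -leEnat; apply: le_bigmin => [|i _]; rewrite leEnat ?min_j //.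
by rewrite -[[::]](take0 y); exact: (min_j ord0).
Qed.

Lemma mpref_le_lev_cat s : mpref p y <= lev (p ++ s) y.
Proof.
have [j _ le_split] := lev_cat_split p s y.
by apply: leq_trans (mpref_le_take j) (leq_trans (leq_addr _ _) le_split).
Qed.

Variable a : T.

Definition extends_optimal_prefix :=
  exists j, [/\ j < size y, lev p (take j y) = mpref p y & nth a y j = a].

Lemma lev_cat_cons_mpref :
  extends_optimal_prefix -> exists s, lev (p ++ a :: s) y = mpref p y.
Proof.
case=> j [lt_j opt_j nth_j]; exists (drop j.+1 y).
apply/eqP; rewrite eqn_leq mpref_le_lev_cat andbT.
have := lev_cat_le_split p (a :: drop j.+1 y) (ltnW lt_j).
by rewrite -{2}nth_j -drop_nth // lev_refl addn0 opt_j.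
Qed.

Lemma mpref_lt_lev_cat_cons s :
  ~ extends_optimal_prefix -> mpref p y < lev (p ++ a :: s) y.
Proof.
move=> not_ext; have [j _ le_split] := lev_cat_split p (a :: s) y.
have := mpref_le_take j; case: ltnP => // ge_lev le_take.
have opt_j : lev p (take j y) = mpref p y by lia.
have /eqP : lev (a :: s) (drop j y) = 0 by lia.
rewrite lev_eq0 => /eqP drop_j; case: not_ext; exists j; split => //.
  by rewrite -subn_gt0 -size_drop -drop_j.
by rewrite -[j]addn0 -nth_drop -drop_j.
Qed.

Lemma lev_cat_cons_le_mpref_succ :
  exists s, lev (p ++ a :: s) y <= (mpref p y).+1.
Proof.
have [j le_j opt_j] := mpref_attained; exists (drop j y).
apply: leq_trans (lev_cat_le_split _ _ le_j) _.
by rewrite opt_j -addn1 leq_add2l -(lev_refl (drop j y)) lev_consl_le.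
Qed.

End PrefixDistance.

Lemma Qstar_is_opp_min (T : eqType) (p : seq T) (a : T) (y : seq T) (m : nat) :
  (exists s, lev (p ++ a :: s) y = m) -> (forall s, m <= lev (p ++ a :: s) y) ->
  Qstar_is p a y (- m%:Z)%R.
Proof.
case=> s sE ge_m; split=> [|t]; first by exists s; rewrite sE.
by rewrite lerN2 lez_nat.
Qed.

Local Open Scope ring_scope.

Theorem mainTheorem3 (Sigma : finType) (y p : seq Sigma) (a : Sigma) :
  ((exists j : nat, [/\ (j < size y)%N,
                        lev p (take j y) = mpref p y
                      & nth a y j = a]) ->
     Qstar_is p a y (- (mpref p y)%:Z))
  /\ (~ (exists j : nat, [/\ (j < size y)%N,
                             lev p (take j y) = mpref p y
                           & nth a y j = a]) ->
     Qstar_is p a y (- (mpref p y)%:Z - 1))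
  /\ ((- (lev p y)%:Z = - (mpref p y)%:Z) <-> lev p y = mpref p y)
  /\ (lev p y <> mpref p y -> - (lev p y)%:Z <= - (mpref p y)%:Z - 1).
Proof.
have le_mpref_lev : (mpref p y <= lev p y)%N.
  by rewrite -{2}[p]cats0 mpref_le_lev_cat.
split; [|split; [|split; lia]].
- move=> ext; apply: Qstar_is_opp_min => [|s]; last exact: mpref_le_lev_cat.
  exact: lev_cat_cons_mpref.
- move=> not_ext; rewrite -opprD -PoszD addn1.
  apply: Qstar_is_opp_min => [|s]; last exact: mpref_lt_lev_cat_cons.
  have [s le_s] := lev_cat_cons_le_mpref_succ p y a.
  by exists s; apply/eqP; rewrite eqn_leq le_s mpref_lt_lev_cat_cons.
Qed.
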